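(* Let $\alpha,\beta>0$ and $0<\delta\le1$, and let the inverse demand function be $p(q)=\max\{\alpha-\beta q^{\delta},0\}$ for $q\ge0$. Suppose the cost functions satisfy Assumptions 1, 3 and 4. Then every Cournot equilibrium $\mathbf{x}$ satisfies $\gamma(\mathbf{x})\ge f\big((\delta+1)^{(1-\delta)/\delta}\big)$.
   Context: Cournot model: $N$ suppliers, inverse demand $p$, supplier $n$ has cost $C_n:[0,\infty)\to[0,\infty)$ and chooses $x_n\ge0$; $X=\sum_n x_n$; payoff of $n$ is $x_np(X)-C_n(x_n)$. A Cournot equilibrium is a profile $\mathbf{x}\ge0$ such that no supplier can increase its payoff by unilaterally changing its quantity to any $x\ge0$. $C_n'(0)$ is the right derivative at $0$. Assumption 1: each $C_n$ is convex, continuous, nondecreasing on $[0,\infty)$, continuously differentiable on $(0,\infty)$, with $C_n(0)=0$. Assumption 3: there exists $R>0$ such that $p(R)\le\min_n C_n'(0)$. Assumption 4: $p(0)>\min_n C_n'(0)$. Social welfare of $\mathbf{x}\ge0$: $W(\mathbf{x})=\int_0^X p(q)\,dq-\sum_{n=1}^N C_n(x_n)$; a social optimum $\mathbf{x}^S$ maximizes $W$. Efficiency: $\gamma(\mathbf{x})=W(\mathbf{x})/W(\mathbf{x}^S)$. For $\overline c\ge1$: $f(\overline c)=\dfrac{\phi^2+2}{\phi^2+2\phi+\overline c}$ with $\phi=\max\left\{\dfrac{2-\overline c+\sqrt{\overline c^{\,2}-4\overline c+12}}{2},1\right\}$. *)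

From Stdlib Require Import Reals Lra ClassicalEpsilon.
Open Scope R_scope.

(* q^d for real exponent, with the convention 0^d = 0 (d > 0). *)
Definition rpow (q d : R) : R := if Req_EM_T q 0 then 0 else Rpower q d.

Definition pdem (alpha beta delta q : R) : R := Rmax (alpha - beta * rpow q delta) 0.

(* The Riemann integral of f over [a,b] (the unique value RiemannInt pr,
   for any integrability proof pr; chosen by epsilon). *)
Definition RInt (f : R -> R) (a b : R) : R :=
  epsilon (inhabits 0)
    (fun I => exists pr : Riemann_integrable f a b, RiemannInt pr = I).

Fixpoint sumN (N : nat) (g : nat -> R) : R :=
  match N with O => 0 | S k => sumN k g + g k end.

Definition total (N : nat) (x : nat -> R) : R := sumN N x.

Definition nonneg_profile (N : nat) (x : nat -> R) : Prop :=
  forall n, (n < N)%nat -> 0 <= x n.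

Definition payoff (p : R -> R) (C : nat -> R -> R) (N : nat) (x : nat -> R) (n : nat) : R :=
  x n * p (total N x) - C n (x n).

Definition update (x : nat -> R) (n : nat) (y : R) : nat -> R :=
  fun m => if Nat.eq_dec m n then y else x m.

Definition cournot_eq (p : R -> R) (C : nat -> R -> R) (N : nat) (x : nat -> R) : Prop :=
  nonneg_profile N x /\
  forall n y, (n < N)%nat -> 0 <= y ->
    payoff p C N (update x n y) n <= payoff p C N x n.

Definition welfare (p : R -> R) (C : nat -> R -> R) (N : nat) (x : nat -> R) : R :=
  RInt p 0 (total N x) - sumN N (fun n => C n (x n)).

Definition social_opt (p : R -> R) (C : nat -> R -> R) (N : nat) (xS : nat -> R) : Prop :=
  nonneg_profile N xS /\
  forall x, nonneg_profile N x -> welfare p C N x <= welfare p C N xS.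

Definition efficiency (p : R -> R) (C : nat -> R -> R) (N : nat) (x xS : nat -> R) : R :=
  welfare p C N x / welfare p C N xS.

Definition right_deriv0 (c : R -> R) (d : R) : Prop :=
  forall eps, 0 < eps -> exists del, 0 < del /\
    forall h, 0 < h < del -> Rabs ((c h - c 0) / h - d) < eps.

Definition assumption1 (c : R -> R) : Prop :=
  (forall x y t, 0 <= x -> 0 <= y -> 0 <= t <= 1 ->
     c (t * x + (1 - t) * y) <= t * c x + (1 - t) * c y) /\
  (forall x eps, 0 <= x -> 0 < eps -> exists del, 0 < del /\
     forall y, 0 <= y -> Rabs (y - x) < del -> Rabs (c y - c x) < eps) /\
  (forall x y, 0 <= x <= y -> c x <= c y) /\
  (exists c' : R -> R, forall x, 0 < x ->
     derivable_pt_lim c x (c' x) /\ continuity_pt c' x) /\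
  c 0 = 0.

Definition phi_f (cb : R) : R :=
  Rmax ((2 - cb + sqrt (cb ^ 2 - 4 * cb + 12)) / 2) 1.

Definition f_bound (cb : R) : R :=
  let phi := phi_f cb in (phi ^ 2 + 2) / (phi ^ 2 + 2 * phi + cb).

From Pilot Require Import Defs.
From Stdlib Require Import Reals Lra Lia ClassicalEpsilon.
From Coquelicot Require Import Coquelicot.
Open Scope R_scope.

(* Let X be the equilibrium output and P = p(X).  If X = 0, best responses
   force C_n(y) >= p(0) y, so no profile has positive welfare; if P = 0,
   equilibrium costs vanish and no profile beats the equilibrium surplus.
   Otherwise let b = β δ X^(δ-1) be the slope of the demand at X and s the
   largest individual output.  Since q^δ is concave, p lies above its
   tangent at X, and with convex costs the equilibrium conditions give
   subgradients P - b x_n of C_n at x_n (convex_subgradient, eq_subgradient).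
   The equilibrium surplus is bounded below by the tangent (surplus_lower);
   the surplus any profile gains at the level P - b s is bounded above by a
   trapezoid of width at most c̄ s (overshoot_bound, net_surplus_bound).
   What remains is the quadratic inequality
   f(c̄) (X^2 + 2 s X + c̄ s^2) <= X^2 + 2 s^2 (f_bound_quadratic).

   Assumption 4 makes the
   optimal welfare positive (optimum_welfare_pos), and the theorem follows
   by dividing by it. *)

Lemma sumN_ext N g h : (forall n, (n < N)%nat -> g n = h n) -> sumN N g = sumN N h.
Proof.
  induction N as [|N IH]; simpl; intros H; auto.
  rewrite IH by (intros; apply H; lia). rewrite H by lia. reflexivity.
Qed.

Lemma sumN_le N g h : (forall n, (n < N)%nat -> g n <= h n) -> sumN N g <= sumN N h.
Proof.
  induction N as [|N IH]; simpl; intros H; [lra|].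
  assert (sumN N g <= sumN N h) by (apply IH; intros; apply H; lia).
  specialize (H N ltac:(lia)). lra.
Qed.

Lemma sumN_plus N g h : sumN N (fun n => g n + h n) = sumN N g + sumN N h.
Proof. induction N as [|N IH]; simpl; [lra|]. rewrite IH; lra. Qed.

Lemma sumN_scal N k g : sumN N (fun n => k * g n) = k * sumN N g.
Proof. induction N as [|N IH]; simpl; [lra|]. rewrite IH; lra. Qed.

Lemma sumN_const0 N : sumN N (fun _ => 0) = 0.
Proof. induction N as [|N IH]; simpl; [lra|]. rewrite IH; lra. Qed.

Lemma sumN_nonneg N g : (forall n, (n < N)%nat -> 0 <= g n) -> 0 <= sumN N g.
Proof. intros H. rewrite <- (sumN_const0 N). apply sumN_le. auto. Qed.

Lemma sumN_term N g m :
  (forall n, (n < N)%nat -> 0 <= g n) -> (m < N)%nat -> g m <= sumN N g.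
Proof.
  induction N as [|N IH]; simpl; intros H Hm; [lia|].
  assert (0 <= g N) by (apply H; lia).
  destruct (Nat.eq_dec m N) as [->|Hne].
  - assert (0 <= sumN N g) by (apply sumN_nonneg; intros; apply H; lia). lra.
  - assert (g m <= sumN N g) by (apply IH; [intros; apply H; lia | lia]). lra.
Qed.

Lemma update_same x n y : update x n y n = y.
Proof. unfold update. destruct (Nat.eq_dec n n); congruence. Qed.

Lemma sumN_update N x n y :
  (n < N)%nat -> sumN N (update x n y) = sumN N x - x n + y.
Proof.
  induction N as [|N IH]; simpl; intros Hn; [lia|].
  unfold update at 2. destruct (Nat.eq_dec N n) as [->|Hne].
  - rewrite (sumN_ext n (update x n y) x); [lra|].
    intros k Hk. unfold update. destruct (Nat.eq_dec k n); [lia | reflexivity].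
  - rewrite IH by lia. lra.
Qed.

Lemma payoff_update p C N x n y : (n < N)%nat ->
  payoff p C N (update x n y) n = y * p (total N x - x n + y) - C n y.
Proof. intros Hn. unfold payoff, total. rewrite sumN_update, update_same by auto. reflexivity. Qed.

Lemma argmax N x :
  (0 < N)%nat -> exists m, (m < N)%nat /\ forall n, (n < N)%nat -> x n <= x m.
Proof.
  induction N as [|N IH]; intros H; [lia|]. destruct N as [|N].
  - exists 0%nat. split; [lia|]. intros k Hk. replace k with 0%nat by lia. lra.
  - destruct IH as [m [Hm Hmax]]; [lia|].
    destruct (Rle_dec (x (S N)) (x m)) as [Hle|Hgt].
    + exists m. split; [lia|]. intros k Hk.
      destruct (Nat.eq_dec k (S N)) as [->|]; [auto | apply Hmax; lia].
    + exists (S N). split; [lia|]. intros k Hk.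
      destruct (Nat.eq_dec k (S N)) as [->|]; [lra|].
      specialize (Hmax k ltac:(lia)). lra.
Qed.

Lemma rpow_pos q d : 0 < q -> rpow q d = Rpower q d.
Proof. intros H. unfold rpow. destruct (Req_EM_T q 0); [lra | reflexivity]. Qed.

Lemma rpow_0 d : rpow 0 d = 0.
Proof. unfold rpow. destruct (Req_EM_T 0 0); [reflexivity | lra]. Qed.

Lemma Rpower_gt0 q d : 0 < Rpower q d.
Proof. apply exp_pos. Qed.

Lemma Rpower_inv_exp z d : 0 < z -> 0 < d -> Rpower (Rpower z (/ d)) d = z.
Proof.
  intros Hz Hd. rewrite Rpower_mult. replace (/ d * d) with 1 by (field; lra).
  apply Rpower_1; lra.
Qed.

Lemma Rpower_mult_r q d : 0 < q -> Rpower q d = Rpower q (d - 1) * q.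
Proof. intros Hq. rewrite <- (Rpower_1 q) at 3 by lra. rewrite <- Rpower_plus. f_equal; ring. Qed.

(* Convexity of [exp] along the segment [0, L]. *)
Lemma exp_convex d L : 0 <= d <= 1 -> exp (d * L) <= d * exp L + (1 - d).
Proof.
  intros Hd. set (m := d * L).
  assert (E1 : exp L = exp m * exp (L - m)) by (rewrite <- exp_plus; f_equal; lra).
  assert (E2 : 1 = exp m * exp (- m)).
  { rewrite <- exp_plus. replace (m + - m) with 0 by lra. now rewrite exp_0. }
  pose proof (exp_ineq1_le (L - m)). pose proof (exp_ineq1_le (- m)). pose proof (exp_pos m).
  assert (d * exp L >= d * (exp m * (1 + (L - m)))).
  { rewrite E1. apply Rmult_ge_compat_l; [lra|]. apply Rle_ge, Rmult_le_compat_l; lra. }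
  assert ((1 - d) * 1 >= (1 - d) * (exp m * (1 + - m))).
  { apply Rmult_ge_compat_l; [lra|]. rewrite E2 at 1. apply Rle_ge, Rmult_le_compat_l; lra. }
  assert (d * (exp m * (1 + (L - m))) + (1 - d) * (exp m * (1 + - m)) = exp m) by (unfold m; ring).
  lra.
Qed.

Lemma bernoulli r d : 0 <= r -> 0 < d <= 1 -> rpow r d <= 1 + d * (r - 1).
Proof.
  intros Hr Hd. destruct (Req_dec r 0) as [->|Hne].
  - rewrite rpow_0. lra.
  - rewrite rpow_pos by lra. unfold Rpower.
    pose proof (exp_convex d (ln r) ltac:(lra)) as H. rewrite exp_ln in H by lra. lra.
Qed.

Lemma rpow_tangent d q w : 0 < d <= 1 -> 0 < q -> 0 <= w ->
  rpow w d <= rpow q d + d * Rpower q (d - 1) * (w - q).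
Proof.
  intros Hd Hq Hw. rewrite (rpow_pos q) by lra.
  pose proof (Rpower_gt0 q (d - 1)) as Hp.
  rewrite (Rpower_mult_r q d) by lra.
  destruct (Req_dec w 0) as [->|Hne].
  - rewrite rpow_0.
    assert (0 <= Rpower q (d - 1) * q * (1 - d)) by (apply Rmult_le_pos; [apply Rmult_le_pos|]; lra).
    nra.
  - pose proof (bernoulli (w / q) d ltac:(apply Rle_mult_inv_pos; lra) Hd) as B.
    rewrite rpow_pos in B |- * by (try apply Rdiv_lt_0_compat; lra).
    replace w with ((w / q) * q) at 1 by (field; lra).
    rewrite <- Rpower_mult_distr by (try apply Rdiv_lt_0_compat; lra).
    rewrite (Rpower_mult_r q d) by lra.
    assert (Rpower (w / q) d * (Rpower q (d - 1) * q)
            <= (1 + d * (w / q - 1)) * (Rpower q (d - 1) * q)).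
    { apply Rmult_le_compat_r; [|lra]. apply Rmult_le_pos; lra. }
    replace ((1 + d * (w / q - 1)) * (Rpower q (d - 1) * q))
      with (Rpower q (d - 1) * q + d * Rpower q (d - 1) * (w - q)) in H by (field; lra).
    lra.
Qed.

Lemma rpow_chord d u q v : 0 < d <= 1 -> 0 <= u < q -> q < v ->
  (v - q) * rpow u d + (q - u) * rpow v d <= (v - u) * rpow q d.
Proof.
  intros Hd Huq Hqv.
  pose proof (rpow_tangent d q u Hd ltac:(lra) ltac:(lra)) as Tu.
  pose proof (rpow_tangent d q v Hd ltac:(lra) ltac:(lra)) as Tv.
  set (D := d * Rpower q (d - 1)) in *.
  assert ((v - q) * rpow u d <= (v - q) * (rpow q d + D * (u - q))) by (apply Rmult_le_compat_l; lra).
  assert ((q - u) * rpow v d <= (q - u) * (rpow q d + D * (v - q))) by (apply Rmult_le_compat_l; lra).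
  nra.
Qed.

Lemma rpow_le d w q : 0 < d -> 0 <= w <= q -> rpow w d <= rpow q d.
Proof.
  intros Hd Hwq. destruct (Req_dec w q) as [->|]; [lra|].
  rewrite (rpow_pos q) by lra. destruct (Req_dec w 0) as [->|].
  - rewrite rpow_0. left; apply Rpower_gt0.
  - rewrite rpow_pos by lra. left; apply Rlt_Rpower_l; lra.
Qed.

Definition cont_nonneg_at (k : R -> R) (x : R) : Prop :=
  forall eps, 0 < eps -> exists eta, 0 < eta /\
    forall y, 0 <= y -> Rabs (y - x) < eta -> Rabs (k y - k x) < eps.

Lemma rpow_cont d q : 0 < d -> 0 <= q -> cont_nonneg_at (fun w => rpow w d) q.
Proof.
  intros Hd Hq eps He. destruct (Req_dec q 0) as [->|Hq0].
  - (* at 0: w^d < eps as soon as w < eps^(1/d) *)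
    exists (Rpower eps (/ d)). split; [apply Rpower_gt0|]. intros w Hw Hwe.
    rewrite rpow_0, Rminus_0_r in *. destruct (Req_dec w 0) as [->|Hw0].
    + rewrite rpow_0, Rabs_R0. lra.
    + rewrite rpow_pos by lra. rewrite Rabs_pos_eq in * by (try lra; left; apply Rpower_gt0).
      rewrite <- (Rpower_inv_exp eps d) by lra. apply Rlt_Rpower_l; lra.
  -
    assert (Hdp : derivable_pt (fun w => Rpower w d) q).
    { exists (d * Rpower q (d - 1)). apply derivable_pt_lim_power; lra. }
    pose proof (derivable_continuous_pt _ _ Hdp) as Hc.
    destruct (Hc eps He) as [alp [Halp Hx]].
    exists (Rmin alp q). split; [apply Rmin_pos; lra|]. intros w Hw Hwq.
    pose proof (Rmin_l alp q). pose proof (Rmin_r alp q).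
    assert (0 < w) by (apply Rabs_def2 in Hwq; lra).
    rewrite !rpow_pos by lra. destruct (Req_dec w q) as [->|Hne].
    + rewrite Rminus_diag, Rabs_R0; lra.
    + apply Hx. split; [split; [exact I | auto]|]. simpl. unfold R_dist. lra.
Qed.

(* The Riemann integral used in the welfare ([Defs.RInt], chosen by epsilon)
   agrees with Coquelicot's [RInt] wherever the integral exists. *)
Lemma RInt_Defs f A B : ex_RInt f A B -> Defs.RInt f A B = RInt f A B.
Proof.
  intros H. pose proof (ex_RInt_Reals_0 _ _ _ H) as pr. unfold Defs.RInt.
  destruct (epsilon_spec (inhabits 0)
              (fun I => exists pr : Riemann_integrable f A B, RiemannInt pr = I)) as [pr' Hpr'].
  { exists (RiemannInt pr). exists pr. reflexivity. }
  rewrite <- Hpr'. symmetry. apply RInt_Reals.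
Qed.

Lemma is_RInt_affine u v A B :
  is_RInt (fun q => u + v * q) A B (u * (B - A) + v * (B * B - A * A) / 2).
Proof.
  set (F := fun q => u * q + v * (q * q) / 2).
  replace (u * (B - A) + v * (B * B - A * A) / 2) with (minus (F B) (F A))
    by (unfold F, minus, plus, opp; simpl; field).
  apply (is_RInt_derive (V := R_CompleteNormedModule) F).
  - intros q _. unfold F. auto_derive; auto.
    change (u * 1 + v * (1 * q + q * 1) * / 2 = u + v * q). field.
  - intros q _. apply continuity_pt_filterlim, continuity_pt_plus.
    + apply continuity_pt_const. intros a b; auto.
    + apply continuity_pt_mult; [apply continuity_pt_const; intros a b; auto|].
      apply derivable_continuous_pt, derivable_pt_id.
Qed.

Lemma RInt_ge_affine f u v A B : A <= B -> ex_RInt f A B ->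
  (forall q, A < q < B -> u + v * q <= f q) ->
  u * (B - A) + v * (B * B - A * A) / 2 <= RInt f A B.
Proof.
  intros HAB Hex H. rewrite <- (is_RInt_unique _ _ _ _ (is_RInt_affine u v A B)).
  apply RInt_le; auto. eexists. apply is_RInt_affine.
Qed.

Lemma RInt_le_affine f u v A B : A <= B -> ex_RInt f A B ->
  (forall q, A < q < B -> f q <= u + v * q) ->
  RInt f A B <= u * (B - A) + v * (B * B - A * A) / 2.
Proof.
  intros HAB Hex H. rewrite <- (is_RInt_unique _ _ _ _ (is_RInt_affine u v A B)).
  apply RInt_le; auto. eexists. apply is_RInt_affine.
Qed.

Lemma RInt_ge_const f k A B : A <= B -> ex_RInt f A B ->
  (forall q, A < q < B -> k <= f q) -> k * (B - A) <= RInt f A B.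
Proof.
  intros HAB Hex H. replace (k * (B - A)) with (k * (B - A) + 0 * (B * B - A * A) / 2) by field.
  apply RInt_ge_affine; auto. intros q Hq. specialize (H q Hq). lra.
Qed.

Lemma RInt_le_const f k A B : A <= B -> ex_RInt f A B ->
  (forall q, A < q < B -> f q <= k) -> RInt f A B <= k * (B - A).
Proof.
  intros HAB Hex H. replace (k * (B - A)) with (k * (B - A) + 0 * (B * B - A * A) / 2) by field.
  apply RInt_le_affine; auto. intros q Hq. specialize (H q Hq). lra.
Qed.

Lemma RInt_trapezoid f u0 u1 A B : A < B -> ex_RInt f A B ->
  (forall q, A < q < B -> (B - A) * f q <= (B - q) * u0 + (q - A) * u1) ->
  RInt f A B <= (u0 + u1) * (B - A) / 2.
Proof.
  intros HAB Hex H.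
  set (u := (B * u0 - A * u1) / (B - A)). set (v := (u1 - u0) / (B - A)).
  replace ((u0 + u1) * (B - A) / 2) with (u * (B - A) + v * (B * B - A * A) / 2)
    by (unfold u, v; field; lra).
  apply RInt_le_affine; [lra | exact Hex |]. intros q Hq.
  apply (Rmult_le_reg_l (B - A)); [lra|].
  replace ((B - A) * (u + v * q)) with ((B - q) * u0 + (q - A) * u1) by (unfold u, v; field; lra).
  auto.
Qed.

Lemma net_surplus_max f a Z Y :
  (forall A B, 0 <= A <= B -> ex_RInt f A B) -> 0 <= Z -> 0 <= Y ->
  (forall q, 0 <= q <= Z -> a <= f q) -> (forall q, Z <= q -> f q <= a) ->
  RInt f 0 Y - a * Y <= RInt f 0 Z - a * Z.
Proof.
  intros Hint HZ HY Hge Hle.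
  destruct (Rle_dec Y Z) as [HYZ|HYZ].
  - rewrite <- (RInt_Chasles (V := R_CompleteNormedModule) f 0 Y Z) by (apply Hint; lra).
    pose proof (RInt_ge_const f a Y Z HYZ (Hint Y Z ltac:(lra)) (fun q Hq => Hge q ltac:(lra))).
    unfold plus; simpl. lra.
  - rewrite <- (RInt_Chasles (V := R_CompleteNormedModule) f 0 Z Y) by (apply Hint; lra).
    pose proof (RInt_le_const f a Z Y ltac:(lra) (Hint Z Y ltac:(lra)) (fun q Hq => Hle q ltac:(lra))).
    unfold plus; simpl. lra.
Qed.

Definition demand_slope (be d X : R) : R := be * d * Rpower X (d - 1).

Definition cbar (d : R) : R := Rpower (d + 1) ((1 - d) / d).

Lemma Rmax0_lip a b : Rabs (Rmax a 0 - Rmax b 0) <= Rabs (a - b).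
Proof.
  unfold Rmax. destruct (Rle_dec a 0); destruct (Rle_dec b 0);
    unfold Rabs; repeat destruct Rcase_abs; lra.
Qed.

Section Demand.
Variables (al be d : R).
Hypotheses (Hbe : 0 < be) (Hd : 0 < d <= 1).
Local Notation p := (pdem al be d).

Lemma pdem_ge0 q : 0 <= p q.
Proof. apply Rmax_r. Qed.

Lemma pdem_ge q : al - be * rpow q d <= p q.
Proof. apply Rmax_l. Qed.

Lemma pdem_eq q : 0 <= al - be * rpow q d -> p q = al - be * rpow q d.
Proof. intros H. apply Rmax_left. lra. Qed.

Lemma pdem_pos_eq q : 0 < p q -> p q = al - be * rpow q d.
Proof. unfold pdem, Rmax. destruct (Rle_dec (al - be * rpow q d) 0); lra. Qed.

Lemma pdem_antitone q w : 0 <= q <= w -> p w <= p q.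
Proof.
  intros Hqw. pose proof (rpow_le d q w ltac:(lra) Hqw).
  pose proof (pdem_ge q). unfold pdem at 1. apply Rmax_lub; [nra | apply pdem_ge0].
Qed.

Lemma pdem_cont q : 0 <= q -> cont_nonneg_at p q.
Proof.
  intros Hq eps He.
  destruct (rpow_cont d q ltac:(lra) Hq (eps / be)) as [eta [Heta H]];
    [apply Rdiv_lt_0_compat; lra|].
  exists eta. split; auto. intros w Hw Hwq. specialize (H w Hw Hwq). unfold pdem.
  eapply Rle_lt_trans; [apply Rmax0_lip|].
  replace (al - be * rpow w d - (al - be * rpow q d)) with (- be * (rpow w d - rpow q d)) by ring.
  rewrite Rabs_mult, Rabs_Ropp, (Rabs_pos_eq be) by lra.
  apply (Rmult_lt_compat_l be) in H; [|lra].
  replace (be * (eps / be)) with eps in H by (field; lra). exact H.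
Qed.

Lemma pdem_ext_continuous z : continuous (fun q => p (Rmax q 0)) z.
Proof.
  apply continuity_pt_filterlim. intros eps He.
  destruct (pdem_cont (Rmax z 0) (Rmax_r _ _) eps He) as [eta [Heta H]].
  exists eta. split; auto. intros y [_ Hy]. simpl in *. unfold R_dist in *.
  apply H; [apply Rmax_r|]. eapply Rle_lt_trans; [|exact Hy].
  unfold Rmax. destruct (Rle_dec y 0); destruct (Rle_dec z 0);
    unfold Rabs; repeat destruct Rcase_abs; lra.
Qed.

Lemma pdem_ex_RInt A B : 0 <= A <= B -> ex_RInt p A B.
Proof.
  intros HAB. apply (ex_RInt_ext (fun q => p (Rmax q 0))).
  - intros q Hq. rewrite Rmin_left, Rmax_right in Hq by lra. rewrite Rmax_left by lra. reflexivity.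
  - apply (ex_RInt_continuous (V := R_CompleteNormedModule)). intros; apply pdem_ext_continuous.
Qed.

Lemma pdem_tangent X w : 0 < X -> 0 < p X -> 0 <= w ->
  p X - demand_slope be d X * (w - X) <= p w.
Proof.
  intros HX HP Hw. pose proof (rpow_tangent d X w Hd HX Hw).
  pose proof (pdem_ge w). rewrite (pdem_pos_eq X HP). unfold demand_slope.
  assert (be * rpow w d <= be * (rpow X d + d * Rpower X (d - 1) * (w - X)))
    by (apply Rmult_le_compat_l; lra).
  nra.
Qed.

Lemma pdem_chord u q v : 0 <= u < q -> q < v -> 0 <= al - be * rpow v d ->
  (v - u) * p q <= (v - q) * p u + (q - u) * p v.
Proof.
  intros Huq Hqv Hv. pose proof (rpow_chord d u q v Hd Huq Hqv).
  pose proof (pdem_ge u).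
  assert (Hq : 0 <= al - be * rpow q d).
  { pose proof (rpow_le d q v ltac:(lra) ltac:(lra)). nra. }
  rewrite (pdem_eq q Hq), (pdem_eq v Hv). nra.
Qed.

Lemma surplus_lower X : 0 < X -> 0 < p X ->
  p X * X + demand_slope be d X * X * X / 2 <= RInt p 0 X.
Proof.
  intros HX HP. set (b := demand_slope be d X).
  replace (p X * X + b * X * X / 2) with ((p X + b * X) * (X - 0) + - b * (X * X - 0 * 0) / 2)
    by field.
  apply RInt_ge_affine; [lra | apply pdem_ex_RInt; lra |].
  intros q Hq. pose proof (pdem_tangent X q HX HP ltac:(lra)). unfold b. lra.
Qed.

End Demand.

Lemma overshoot_bound d X Y s : 0 < d <= 1 -> 0 < X -> 0 < Y -> 0 <= s <= X ->
  Rpower Y d = Rpower X d + d * Rpower X (d - 1) * s ->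
  Y - X <= cbar d * s.
Proof.
  intros Hd HX HY Hs HYd. set (r := Y / X).
  assert (Hr : 0 < r) by (apply Rdiv_lt_0_compat; lra).
  assert (HYr : Y = r * X) by (unfold r; field; lra).
  assert (Hrd : Rpower r d <= d + 1).
  { assert (Rpower X (d - 1) * s <= Rpower X (d - 1) * X)
      by (apply Rmult_le_compat_l; [left; apply Rpower_gt0 | lra]).
    rewrite <- Rpower_mult_r in H by lra.
    rewrite HYr, <- Rpower_mult_distr in HYd by lra.
    pose proof (Rpower_gt0 X d).
    apply (Rmult_le_reg_r (Rpower X d)); nra. }
  assert (Hcb : Rpower r (1 - d) <= cbar d).
  { replace (1 - d) with (d * ((1 - d) / d)) by (field; lra).
    rewrite <- Rpower_mult. apply Rle_Rpower_l; [apply Rle_mult_inv_pos; lra|].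
    split; [apply Rpower_gt0 | exact Hrd]. }
  assert (HXY : Rpower X (d - 1) = Rpower r (1 - d) * Rpower Y (d - 1)).
  { rewrite HYr, <- Rpower_mult_distr by lra. rewrite <- Rmult_assoc, <- Rpower_plus.
    replace (1 - d + (d - 1)) with 0 by ring. rewrite Rpower_O; lra. }
  pose proof (rpow_tangent d Y X Hd HY ltac:(lra)) as T.
  rewrite !rpow_pos, HYd, HXY in T by lra.
  pose proof (Rpower_gt0 Y (d - 1)). pose proof (Rpower_gt0 r (1 - d)).
  apply (Rmult_le_reg_l (d * Rpower Y (d - 1))); [nra|].
  assert (d * Rpower Y (d - 1) * (Rpower r (1 - d) * s) <= d * Rpower Y (d - 1) * (cbar d * s)).
  { apply Rmult_le_compat_l; [nra|]. apply Rmult_le_compat_r; lra. }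
  lra.
Qed.

(* Net surplus bound: at the level [a = P - b s] (with [P = p X] and [b] the
   slope at [X]), the net surplus [∫_0^Y p - a Y] of any [Y] exceeds the
   surplus up to [X] by at most a rectangle [b s X] and a triangle
   [c̄ b s^2 / 2]. *)
Lemma net_surplus_bound al be d X s Y : 0 < be -> 0 < d <= 1 -> 0 < X ->
  0 < pdem al be d X -> 0 < s <= X ->
  0 <= pdem al be d X - demand_slope be d X * s -> 0 <= Y ->
  RInt (pdem al be d) 0 Y - (pdem al be d X - demand_slope be d X * s) * Y <=
  RInt (pdem al be d) 0 X - pdem al be d X * X + demand_slope be d X * s * X
    + cbar d * demand_slope be d X * s * s / 2.
Proof.
  intros Hbe Hd HX HP Hs Ha HY.
  set (p := pdem al be d) in *. set (P := p X) in *. set (b := demand_slope be d X) in *.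
  set (a := P - b * s) in *.
  assert (Hb : 0 < b).
  { unfold b, demand_slope. repeat apply Rmult_lt_0_compat; try lra. apply Rpower_gt0. }
  (* [Ys] is the quantity at which the price drops to [a]. *)
  set (z := Rpower X d + d * Rpower X (d - 1) * s).
  assert (Hinc : 0 < d * Rpower X (d - 1) * s).
  { repeat apply Rmult_lt_0_compat; try lra. apply Rpower_gt0. }
  assert (Hz : 0 < z) by (unfold z; pose proof (Rpower_gt0 X d); lra).
  set (Ys := Rpower z (/ d)).
  assert (HYs0 : 0 < Ys) by apply Rpower_gt0.
  assert (HYsd : Rpower Ys d = z) by (apply Rpower_inv_exp; lra).
  assert (Hlevel : al - be * rpow Ys d = a).
  { rewrite rpow_pos, HYsd by lra. unfold a, P, b, p, z, demand_slope.
    rewrite (pdem_pos_eq al be d X HP), rpow_pos by lra. ring. }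
  assert (HpYs : p Ys = a) by (unfold p; rewrite pdem_eq; lra).
  assert (HXYs : X < Ys).
  { destruct (Rlt_dec X Ys) as [|Hn]; auto. apply Rnot_lt_le in Hn.
    pose proof (rpow_le d Ys X ltac:(lra) ltac:(lra)). rewrite !rpow_pos, HYsd in H by lra.
    unfold z in H. lra. }
  assert (Hgap : Ys - X <= cbar d * s) by (apply (overshoot_bound d X Ys s); auto; lra).
  assert (Hmax : RInt p 0 Y - a * Y <= RInt p 0 Ys - a * Ys).
  { apply net_surplus_max; auto; [intros; apply pdem_ex_RInt; lra | lra | |].
    - intros q Hq. rewrite <- HpYs. apply pdem_antitone; lra.
    - intros q Hq. rewrite <- HpYs. apply pdem_antitone; lra. }
  assert (Htrap : RInt p X Ys <= (P + a) * (Ys - X) / 2).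
  { apply RInt_trapezoid; [lra | apply pdem_ex_RInt; lra |].
    intros q Hq. rewrite <- HpYs. apply pdem_chord; auto; lra. }
  rewrite <- (RInt_Chasles (V := R_CompleteNormedModule) p 0 X Ys) in Hmax
    by (apply pdem_ex_RInt; lra).
  unfold plus in Hmax; simpl in Hmax.
  assert (b * s * (Ys - X) <= b * s * (cbar d * s)) by (apply Rmult_le_compat_l; nra).
  unfold a in *. nra.
Qed.

Definition convex_nonneg (h : R -> R) : Prop :=
  forall u v t, 0 <= u -> 0 <= v -> 0 <= t <= 1 ->
    h (t * u + (1 - t) * v) <= t * h u + (1 - t) * h v.

Lemma convex_subgradient h k x : convex_nonneg h -> 0 <= x -> cont_nonneg_at k x ->
  (forall y, 0 <= y -> (y - x) * k y <= h y - h x) ->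
  forall y, 0 <= y -> (y - x) * k x <= h y - h x.
Proof.
  intros Hc Hx Hk Hsec y Hy.
  destruct (Req_dec y x) as [->|Hne]; [lra|].
  apply Rnot_lt_le. intros Hlt.
  assert (Hd : 0 < Rabs (y - x)) by (apply Rabs_pos_lt; lra).
  set (eps := ((y - x) * k x - (h y - h x)) / Rabs (y - x)).
  assert (Heps : 0 < eps) by (apply Rdiv_lt_0_compat; lra).
  destruct (Hk eps Heps) as [eta [Heta Hke]].
  set (t := Rmin 1 (eta / (2 * Rabs (y - x)))).
  assert (Ht0 : 0 < t) by (apply Rmin_pos; [lra | apply Rdiv_lt_0_compat; lra]).
  assert (Ht1 : t <= 1) by apply Rmin_l.
  assert (Ht2 : t * Rabs (y - x) <= eta / 2).
  { replace (eta / 2) with (eta / (2 * Rabs (y - x)) * Rabs (y - x)) by (field; lra).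
    apply Rmult_le_compat_r; [lra | apply Rmin_r]. }
  set (z := t * y + (1 - t) * x).
  assert (Hzx : z - x = t * (y - x)) by (unfold z; ring).
  assert (Hz : 0 <= z) by (unfold z; nra).
  assert (Hkz : Rabs (k z - k x) < eps).
  { apply Hke; auto. rewrite Hzx, Rabs_mult, (Rabs_pos_eq t); lra. }
  (* convexity transfers the secant bound at [z] to the whole segment *)
  assert (Hyx : (y - x) * k z <= h y - h x).
  { pose proof (Hc y x t Hy Hx (conj (Rlt_le _ _ Ht0) Ht1)) as Hconv. fold z in Hconv.
    pose proof (Hsec z Hz) as Hsz. rewrite Hzx in Hsz.
    apply (Rmult_le_reg_l t); lra. }
  assert (Hb : - (Rabs (y - x) * Rabs (k z - k x)) <= (y - x) * (k z - k x)).
  { rewrite <- Rabs_mult. pose proof (Rle_abs (- ((y - x) * (k z - k x)))).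
    rewrite Rabs_Ropp in H. lra. }
  assert (Rabs (y - x) * Rabs (k z - k x) < Rabs (y - x) * eps) by (apply Rmult_lt_compat_l; lra).
  assert (Rabs (y - x) * eps = (y - x) * k x - (h y - h x)) by (unfold eps; field; lra).
  lra.
Qed.

Lemma cost_convex c : assumption1 c -> convex_nonneg c.
Proof. intros [H _]. exact H. Qed.

Lemma cost_zero c : assumption1 c -> c 0 = 0.
Proof. intros (_ & _ & _ & _ & H). exact H. Qed.

Lemma cost_nonneg c y : assumption1 c -> 0 <= y -> 0 <= c y.
Proof. intros (_ & _ & Hm & _ & H0) Hy. rewrite <- H0. apply Hm. lra. Qed.

Lemma phi_ge1 c : 1 <= phi_f c.
Proof. apply Rmax_r. Qed.

Lemma cbar_ge1 d : 0 < d <= 1 -> 1 <= cbar d.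
Proof.
  intros Hd. unfold cbar. rewrite <- (Rpower_O (d + 1)) at 1 by lra.
  apply Rle_Rpower; [lra | apply Rle_mult_inv_pos; lra].
Qed.

Lemma f_bound_unit c : 1 <= c -> 0 <= f_bound c <= 1.
Proof.
  intros Hc. unfold f_bound. pose proof (phi_ge1 c). set (ph := phi_f c) in *.
  assert (0 < ph ^ 2 + 2 * ph + c) by nra.
  split.
  - apply Rle_mult_inv_pos; nra.
  - apply Rle_div_l; nra.
Qed.

(* When [φ > 1]
   the difference of the two sides is the square [(2φ + c - 2)(X - φ s)^2],
   since [φ] solves [φ^2 = (2 - c) φ + 2]; when [φ = 1] (i.e. [c >= 3]) it
   factors through [(X - s)(c X + (c - 6) s)]. *)
Lemma f_bound_quadratic c X s : 1 <= c -> 0 <= s <= X ->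
  f_bound c * (X * X + 2 * s * X + c * (s * s)) <= X * X + 2 * (s * s).
Proof.
  intros Hc Hs. unfold f_bound. pose proof (phi_ge1 c). set (ph := phi_f c) in *.
  assert (Hpos : 0 < ph ^ 2 + 2 * ph + c) by nra.
  unfold Rdiv. rewrite Rmult_comm, <- Rmult_assoc. apply Rle_div_l; [lra|].
  unfold ph, phi_f. set (S := sqrt (c ^ 2 - 4 * c + 12)).
  assert (HS2 : S * S = c ^ 2 - 4 * c + 12) by (unfold S; apply sqrt_sqrt; nra).
  assert (HS0 : 0 <= S) by apply sqrt_pos.
  unfold Rmax. destruct (Rle_dec ((2 - c + S) / 2) 1) as [Hle|Hgt].
  - assert (c >= 3) by nra.
    assert (0 <= (X - s) * (c * X + (c - 6) * s)) by (apply Rmult_le_pos; nra).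
    assert (0 <= c * (s * s)) by nra. nra.
  - set (r := (2 - c + S) / 2) in *.
    assert (Hr : r ^ 2 - (2 - c) * r - 2 = 0) by (unfold r; nra).
    assert (E : (X * X + 2 * (s * s)) * (r ^ 2 + 2 * r + c) - (X * X + 2 * s * X + c * (s * s)) * (r ^ 2 + 2)
               = (2 * r + c - 2) * (X - r * s) ^ 2).
    { transitivity ((2 * r + c - 2) * (X - r * s) ^ 2 + 2 * s * (X - r * s) * (r ^ 2 - (2 - c) * r - 2));
        [ring | rewrite Hr; ring]. }
    assert (0 <= (2 * r + c - 2) * (X - r * s) ^ 2) by (apply Rmult_le_pos; [lra | apply pow2_ge_0]).
    lra.
Qed.

Lemma welfare_pdem al be d C N y : 0 < be -> 0 < d <= 1 -> nonneg_profile N y ->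
  welfare (pdem al be d) C N y
  = RInt (pdem al be d) 0 (total N y) - sumN N (fun n => C n (y n)).
Proof.
  intros Hbe Hd Hy. unfold welfare. rewrite RInt_Defs; [reflexivity|].
  apply pdem_ex_RInt; auto. split; [lra | apply sumN_nonneg; auto].
Qed.

Lemma small_entry_gain al be d c d0 : 0 < be -> 0 < d <= 1 ->
  right_deriv0 c d0 -> c 0 = 0 -> d0 < pdem al be d 0 ->
  exists h, 0 < h /\ c h < RInt (pdem al be d) 0 h.
Proof.
  intros Hbe Hd Hc0 Hz Hlt. set (p := pdem al be d). set (e := (p 0 - d0) / 3).
  assert (He : 0 < e) by (unfold e, p; lra).
  destruct (Hc0 e He) as [del [Hdel Hslope]].
  destruct (pdem_cont al be d Hbe Hd 0 (Rle_refl 0) e He) as [eta [Heta Hpc]].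
  set (h := Rmin del eta / 2).
  pose proof (Rmin_pos del eta Hdel Heta). pose proof (Rmin_l del eta). pose proof (Rmin_r del eta).
  exists h. split; [unfold h; lra|].
  assert (HI : (p 0 - e) * (h - 0) <= RInt p 0 h).
  { apply RInt_ge_const; [unfold h; lra | apply pdem_ex_RInt; auto; unfold h; lra |].
    intros q Hq. assert (Rabs (q - 0) < eta) by (rewrite Rminus_0_r, Rabs_pos_eq; unfold h in *; lra).
    specialize (Hpc q ltac:(lra) H2). apply Rabs_def2 in Hpc. fold p in Hpc. lra. }
  specialize (Hslope h ltac:(unfold h; lra)). rewrite Hz, Rminus_0_r in Hslope.
  apply Rabs_def2 in Hslope.
  assert (Hh : 0 < h) by (unfold h; lra).
  assert (c h < (d0 + e) * h).
  { replace (c h) with (c h / h * h) by (field; lra). apply Rmult_lt_compat_r; lra. }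
  assert (0 < e * h) by (apply Rmult_lt_0_compat; lra).
  unfold e in *. lra.
Qed.

Lemma optimum_welfare_pos al be d N C dC0 xS : 0 < be -> 0 < d <= 1 ->
  (forall n, (n < N)%nat -> assumption1 (C n)) ->
  (forall n, (n < N)%nat -> right_deriv0 (C n) (dC0 n)) ->
  (exists n, (n < N)%nat /\ dC0 n < pdem al be d 0) ->
  social_opt (pdem al be d) C N xS -> 0 < welfare (pdem al be d) C N xS.
Proof.
  intros Hbe Hd HA1 Hder [m [Hm Hdm]] [_ Hopt].
  destruct (small_entry_gain al be d (C m) (dC0 m) Hbe Hd (Hder m Hm)
              (cost_zero _ (HA1 m Hm)) Hdm) as [h [Hh Hgain]].
  set (y := update (fun _ => 0) m h).
  assert (Hy : nonneg_profile N y).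
  { intros n Hn. unfold y, update. destruct (Nat.eq_dec n m); lra. }
  eapply Rlt_le_trans; [|exact (Hopt y Hy)]. rewrite welfare_pdem by auto.
  assert (Htot : total N y = h) by (unfold total, y; rewrite sumN_update, sumN_const0 by auto; lra).
  assert (Hcost : sumN N (fun n => C n (y n)) = C m h).
  { rewrite (sumN_ext N _ (update (fun n => C n 0) m (C m h))).
    - rewrite sumN_update by auto. rewrite (sumN_ext N _ (fun _ => 0)), sumN_const0.
      + rewrite (cost_zero _ (HA1 m Hm)). lra.
      + intros n Hn. apply cost_zero, HA1, Hn.
    - intros n Hn. unfold y, update. destruct (Nat.eq_dec n m) as [->|]; reflexivity. }
  rewrite Htot, Hcost. lra.
Qed.

Section Equilibrium.
Variables (al be d : R) (N : nat) (C : nat -> R -> R) (x : nat -> R).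
Hypotheses (Hbe : 0 < be) (Hd : 0 < d <= 1).
Hypothesis HA1 : forall n, (n < N)%nat -> assumption1 (C n).
Hypothesis Hx : cournot_eq (pdem al be d) C N x.
Local Notation p := (pdem al be d).
Local Notation X := (total N x).
Local Notation W := (welfare (pdem al be d) C N).

Lemma cost0 n : (n < N)%nat -> C n 0 = 0.
Proof. intros Hn. exact (cost_zero _ (HA1 n Hn)). Qed.

Lemma eq_nonneg n : (n < N)%nat -> 0 <= x n.
Proof. apply Hx. Qed.

Lemma eq_share_le n : (n < N)%nat -> x n <= X.
Proof. intros Hn. apply sumN_term; auto. exact eq_nonneg. Qed.

Lemma best_response n y : (n < N)%nat -> 0 <= y ->
  y * p (X - x n + y) - C n y <= x n * p X - C n (x n).
Proof.
  intros Hn Hy. pose proof (proj2 Hx n y Hn Hy) as H.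
  rewrite payoff_update in H by auto. exact H.
Qed.

(* A zero equilibrium output would force every cost above [p(0)] per unit,
   leaving no positive welfare anywhere. *)
Lemma zero_output_welfare : X = 0 -> forall y, nonneg_profile N y -> W y <= 0.
Proof.
  intros HX0 y Hy.
  assert (Hx0 : forall n, (n < N)%nat -> x n = 0).
  { intros n Hn. pose proof (eq_share_le n Hn). pose proof (eq_nonneg n Hn). lra. }
  assert (Hcost : forall n v, (n < N)%nat -> 0 <= v -> v * p 0 <= C n v).
  { intros n v Hn Hv.
    enough (Hsub : (v - 0) * p 0 <= C n v - C n 0).
    { rewrite (cost0 n Hn) in Hsub. nra. }
    apply (convex_subgradient (C n) p 0); auto; [apply cost_convex, HA1, Hn | lra | |].
    - apply pdem_cont; auto; lra.
    - intros w Hw. pose proof (best_response n w Hn Hw) as H.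
      rewrite Hx0, HX0, (cost0 n Hn) in H by auto. replace (0 - 0 + w) with w in H by ring.
      rewrite (cost0 n Hn). nra. }
  rewrite welfare_pdem by auto. set (Y := total N y).
  assert (0 <= Y) by (apply sumN_nonneg; auto).
  assert (RInt p 0 Y <= p 0 * (Y - 0)).
  { apply RInt_le_const; [lra | apply pdem_ex_RInt; auto; lra |].
    intros q Hq. apply pdem_antitone; auto; lra. }
  assert (p 0 * Y <= sumN N (fun n => C n (y n))).
  { unfold Y, total. rewrite <- sumN_scal. apply sumN_le. intros n Hn.
    rewrite Rmult_comm. apply Hcost; auto. }
  lra.
Qed.

(* At a zero price no supplier incurs any cost, and no profile beats the
   equilibrium's consumer surplus. *)
Lemma zero_price_welfare : p X = 0 -> forall y, nonneg_profile N y -> W y <= W x.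
Proof.
  intros HP0 y Hy.
  assert (Hcost : forall n, (n < N)%nat -> C n (x n) = 0).
  { intros n Hn. pose proof (best_response n 0 Hn (Rle_refl 0)) as H.
    rewrite HP0, (cost0 n Hn) in H.
    pose proof (cost_nonneg _ (x n) (HA1 n Hn) (eq_nonneg n Hn)). lra. }
  assert (HX0 : 0 <= X) by (apply sumN_nonneg; exact eq_nonneg).
  rewrite !welfare_pdem by (auto; exact eq_nonneg).
  rewrite (sumN_ext N (fun n => C n (x n)) (fun _ => 0) Hcost), sumN_const0.
  assert (0 <= sumN N (fun n => C n (y n))).
  { apply sumN_nonneg. intros n Hn. apply cost_nonneg; auto. }
  assert (RInt p 0 (total N y) - 0 * total N y <= RInt p 0 X - 0 * X).
  { apply net_surplus_max; auto.
    - intros; apply pdem_ex_RInt; auto.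
    - apply sumN_nonneg; auto.
    - intros; apply pdem_ge0.
    - intros q Hq. rewrite <- HP0. apply pdem_antitone; auto. }
  lra.
Qed.

Section PositivePrice.
Hypotheses (HX : 0 < X) (HP : 0 < p X).
Local Notation b := (demand_slope be d X).

(* Since [p] lies above its tangent at [X], each supplier's cost has
   subgradient [p X - b x n] at its equilibrium output. *)
Lemma eq_subgradient n y : (n < N)%nat -> 0 <= y ->
  (y - x n) * (p X - b * x n) <= C n y - C n (x n).
Proof.
  intros Hn Hy. pose proof (eq_nonneg n Hn) as Hxn. pose proof (eq_share_le n Hn) as HxX.
  set (k := fun v => p (X - x n + v) - b * x n).
  replace (p X - b * x n) with (k (x n)) by (unfold k; do 2 f_equal; ring).
  apply convex_subgradient; auto; [apply cost_convex, HA1, Hn | |].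
  - intros eps He. destruct (pdem_cont al be d Hbe Hd X ltac:(lra) eps He) as [eta [Heta Hpc]].
    exists eta. split; auto. intros v Hv Hvx. unfold k.
    replace (X - x n + x n) with X by ring.
    replace (p (X - x n + v) - b * x n - (p X - b * x n)) with (p (X - x n + v) - p X) by ring.
    apply Hpc; [lra|]. replace (X - x n + v - X) with (v - x n) by ring. exact Hvx.
  - intros v Hv. pose proof (best_response n v Hn Hv).
    pose proof (pdem_tangent al be d Hbe Hd X (X - x n + v) HX HP ltac:(lra)).
    assert (x n * (p X - b * (v - x n)) <= x n * p (X - x n + v)).
    { apply Rmult_le_compat_l; auto. replace (v - x n) with (X - x n + v - X) by ring. lra. }
    unfold k. nra.
Qed.

Lemma eq_cost_upper :
  sumN N (fun n => C n (x n)) <= p X * X - b * sumN N (fun n => x n * x n).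
Proof.
  replace (p X * X - b * sumN N (fun n => x n * x n))
    with (sumN N (fun n => p X * x n + - b * (x n * x n)))
    by (rewrite sumN_plus, !sumN_scal; unfold total; ring).
  apply sumN_le. intros n Hn. pose proof (eq_subgradient n 0 Hn (Rle_refl 0)) as H.
  rewrite (cost0 n Hn) in H. nra.
Qed.

Variable m : nat.
Hypotheses (Hm : (m < N)%nat) (Hmax : forall n, (n < N)%nat -> x n <= x m).
Local Notation s := (x m).

Lemma largest_pos : 0 < s.
Proof.
  apply Rnot_le_lt. intros Hs.
  assert (X <= sumN N (fun _ => 0)) by (apply sumN_le; intros n Hn; specialize (Hmax n Hn); lra).
  rewrite sumN_const0 in H. lra.
Qed.

(* The price stays above [b s]: the largest supplier earns a nonnegative
   margin at the tangent line. *)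
Lemma margin_nonneg : 0 <= p X - b * s.
Proof.
  pose proof (eq_subgradient m 0 Hm (Rle_refl 0)) as H. rewrite (cost0 m Hm) in H.
  pose proof (cost_nonneg _ s (HA1 m Hm) (eq_nonneg m Hm)). pose proof largest_pos.
  nra.
Qed.

(* Costs of any profile [y] are bounded below via the subgradients, using
   [x n <= s] to bring them to the common slope [p X - b s]. *)
Lemma cost_lower y : nonneg_profile N y ->
  sumN N (fun n => C n (x n)) + (p X - b * s) * total N y - p X * X
    + b * sumN N (fun n => x n * x n)
  <= sumN N (fun n => C n (y n)).
Proof.
  intros Hy.
  replace (sumN N (fun n => C n (x n)) + (p X - b * s) * total N y - p X * X
             + b * sumN N (fun n => x n * x n))
    with (sumN N (fun n => C n (x n) + (p X - b * s) * y n + - p X * x n + b * (x n * x n)))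
    by (rewrite !sumN_plus, !sumN_scal; unfold total; ring).
  apply sumN_le. intros n Hn.
  pose proof (eq_subgradient n (y n) Hn (Hy n Hn)). pose proof (Hmax n Hn). pose proof (Hy n Hn).
  assert (b * x n * y n <= b * s * y n).
  { apply Rmult_le_compat_r; auto. apply Rmult_le_compat_l; [|lra].
    unfold demand_slope. left; repeat apply Rmult_lt_0_compat; try lra. apply Rpower_gt0. }
  nra.
Qed.

Lemma positive_price_welfare y : nonneg_profile N y ->
  f_bound (cbar d) * W y <= W x.
Proof.
  intros Hy. pose proof largest_pos as Hs. pose proof (eq_share_le m Hm) as HsX.
  assert (Hb : 0 < b).
  { unfold demand_slope. repeat apply Rmult_lt_0_compat; try lra. apply Rpower_gt0. }
  assert (HY : 0 <= total N y) by (apply sumN_nonneg; auto).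
  assert (Hc : 1 <= cbar d) by (apply cbar_ge1; auto).
  pose proof (f_bound_unit _ Hc) as Hf.
  pose proof (net_surplus_bound al be d X s (total N y) Hbe Hd HX HP
                ltac:(lra) margin_nonneg HY) as Hsurplus.
  pose proof (surplus_lower al be d Hbe Hd X HX HP) as Hcs.
  pose proof (f_bound_quadratic (cbar d) X s Hc ltac:(lra)) as Hquad.
  pose proof eq_cost_upper as Hup. pose proof (cost_lower y Hy) as Hlow.
  assert (HQ : s * s <= sumN N (fun n => x n * x n)).
  { apply (sumN_term N (fun n => x n * x n)); auto. intros n Hn. apply Rle_0_sqr. }
  rewrite !welfare_pdem by (auto; exact eq_nonneg).
  set (Q := sumN N (fun n => x n * x n)) in *.
  set (Cx := sumN N (fun n => C n (x n))) in *.
  (* the excess surplus over the tangent line, and the equilibrium profit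
     margin over the tangent-line revenue, are both nonnegative *)
  set (E := RInt p 0 X - p X * X - b * X * X / 2).
  set (K := p X * X - b * Q - Cx).
  assert (HWy : RInt p 0 (total N y) - sumN N (fun n => C n (y n))
                <= E + K + b / 2 * (X * X + 2 * s * X + cbar d * (s * s)))
    by (unfold E, K; lra).
  assert (HWx : RInt p 0 X - Cx = E + K + b / 2 * (X * X) + b * Q) by (unfold E, K; field).
  assert (0 <= E) by (unfold E; lra). assert (0 <= K) by (unfold K; lra).
  assert (f_bound (cbar d) * (b / 2 * (X * X + 2 * s * X + cbar d * (s * s)))
          <= b / 2 * (X * X + 2 * (s * s))).
  { rewrite Rmult_comm, Rmult_assoc. apply Rmult_le_compat_l; [lra|]. lra. }
  nra.
Qed.

End PositivePrice.

Lemma equilibrium_welfare_bound y : nonneg_profile N y -> 0 < W y ->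
  f_bound (cbar d) * W y <= W x.
Proof.
  intros Hy HWy. pose proof (f_bound_unit _ (cbar_ge1 d Hd)) as Hf.
  assert (HX0 : 0 <= X) by (apply sumN_nonneg; exact eq_nonneg).
  destruct (Req_dec X 0) as [HX|HX].
  - pose proof (zero_output_welfare HX y Hy). lra.
  - destruct (Req_dec (p X) 0) as [HP|HP].
    + pose proof (zero_price_welfare HP y Hy). nra.
    + destruct (argmax N x) as [m [Hm Hmax]].
      { destruct N; [unfold total in HX; simpl in HX; lra | lia]. }
      apply (positive_price_welfare ltac:(lra) ltac:(pose proof (pdem_ge0 al be d X); lra) m Hm Hmax y Hy).
Qed.

End Equilibrium.

Theorem mainTheorem15
  (alpha beta delta : R) (N : nat) (C : nat -> R -> R) (dC0 : nat -> R)
  (Halpha : 0 < alpha) (Hbeta : 0 < beta) (Hdelta : 0 < delta <= 1)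
  (HA1 : forall n, (n < N)%nat -> assumption1 (C n))
  (Hd : forall n, (n < N)%nat -> right_deriv0 (C n) (dC0 n))
  (HA3 : exists Rb, 0 < Rb /\
           forall n, (n < N)%nat -> pdem alpha beta delta Rb <= dC0 n)
  (HA4 : exists n, (n < N)%nat /\ dC0 n < pdem alpha beta delta 0)
  (x xS : nat -> R)
  (Hx : cournot_eq (pdem alpha beta delta) C N x)
  (HxS : social_opt (pdem alpha beta delta) C N xS) :
  f_bound (Rpower (delta + 1) ((1 - delta) / delta))
    <= efficiency (pdem alpha beta delta) C N x xS.
Proof.
  pose proof (optimum_welfare_pos alpha beta delta N C dC0 xS Hbeta Hdelta HA1 Hd HA4 HxS) as HWS.
  unfold efficiency. apply (Rle_div_r _ _ _ HWS).
  exact (equilibrium_welfare_bound alpha beta delta N C x Hbeta Hdelta HA1 Hx xS (proj1 HxS) HWS).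
Qed.
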